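(* Let $r_0,r_1,r_2\ge 1$ and $L=\mathfrak{g}(r_0,r_1,r_2)$. If $r_1\ge r_0$ or $r_1\ge r_2$, then $b(L)=r_0r_2$.
   Context: All Lie algebras are over an algebraically closed field $\mathbf{k}$ of characteristic zero. $\mathcal{P}(r_0,r_1,r_2)$ is the poset on $\{b_1,\dots,b_{r_0},m_1,\dots,m_{r_1},t_1,\dots,t_{r_2}\}$ whose strict relations are exactly $b_i\prec m_j$, $m_j\prec t_k$ and $b_i\prec t_k$ for all $i,j,k$ (i.e. $b_1,\dots,b_{r_0}\prec m_1,\dots,m_{r_1}\prec t_1,\dots,t_{r_2}$). $\mathfrak{g}(r_0,r_1,r_2)$ denotes the nilpotent Lie poset algebra $\mathfrak{g}^{\prec}(\mathcal{P}(r_0,r_1,r_2))$: the Lie algebra under the commutator bracket spanned by matrix units $E_{p,q}$ (rows/columns indexed by the poset) with $p\prec q$. The breadth of a Lie algebra $L$ is $b(L)=\max_{x\in L}\operatorname{rank}(\mathrm{ad}_x)$, where $\mathrm{ad}_x=[x,-]$. *)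

From HB Require Import structures.
From mathcomp Require Import all_boot all_order all_algebra.
Unset Printing Implicit Defensive.
Import GRing.Theory.
Local Open Scope ring_scope.

(* The poset P(r0,r1,r2) has ground set 'I_(r0+r1+r2):
   indices i < r0 are b_1..b_{r0}, r0 <= i < r0+r1 are m_1..m_{r1},
   and the rest are t_1..t_{r2}. *)
Definition plevel (r0 r1 r2 : nat) (i : 'I_(r0 + r1 + r2)) : nat :=
  if (i < r0)%N then 0%N else if (i < r0 + r1)%N then 1%N else 2%N.

Definition pprec (r0 r1 r2 : nat) (p q : 'I_(r0 + r1 + r2)) : bool :=
  (plevel r0 r1 r2 p < plevel r0 r1 r2 q)%N.

(* membership in g(r0,r1,r2) = span of E_{p,q} with p < q *)
Definition in_gP (F : fieldType) (r0 r1 r2 : nat)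
  (x : 'M[F]_(r0 + r1 + r2)) : Prop :=
  forall p q, ~~ pprec r0 r1 r2 p q -> x p q = 0.

Definition projP (F : fieldType) (r0 r1 r2 : nat)
  (E : 'M[F]_(r0 + r1 + r2)) : 'M[F]_(r0 + r1 + r2) :=
  \matrix_(p, q) (if pprec r0 r1 r2 p q then E p q else 0).

Definition lie_br (F : fieldType) n (x y : 'M[F]_n) : 'M[F]_n :=
  x *m y - y *m x.

(* Matrix whose rows are mxvec [x, projP E_k] where E_k runs over all matrix
   units; its row space is exactly the image of ad_x restricted to g. *)
Definition ad_img (F : fieldType) (r0 r1 r2 : nat)
  (x : 'M[F]_(r0 + r1 + r2)) :
  'M[F]_((r0 + r1 + r2) * (r0 + r1 + r2), (r0 + r1 + r2) * (r0 + r1 + r2)) :=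
  \matrix_(k < (r0 + r1 + r2) * (r0 + r1 + r2))
     mxvec (lie_br F _ x (projP F r0 r1 r2 (vec_mx (delta_mx 0 k)))).

Definition rank_ad (F : fieldType) (r0 r1 r2 : nat)
  (x : 'M[F]_(r0 + r1 + r2)) : nat := \rank (ad_img F r0 r1 r2 x).

Definition breadth_is (F : fieldType) (r0 r1 r2 : nat) (b : nat) : Prop :=
  (exists x : 'M[F]_(r0 + r1 + r2), in_gP F r0 r1 r2 x /\ rank_ad F r0 r1 r2 x = b) /\
  (forall x : 'M[F]_(r0 + r1 + r2), in_gP F r0 r1 r2 x -> (rank_ad F r0 r1 r2 x <= b)%N).

From mathcomp Require Import all_boot all_order all_algebra.
From mathcomp Require Import zify.
Import GRing.Theory.
Local Open Scope ring_scope.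

(* Write the ground set as bottoms b_i, middles m_j and tops t_k.  A product
   x y of two strictly upper triangular matrices x, y in g can only be
   nonzero at positions (b_i, t_k), since a chain p < l < q in the poset
   forces p to be a bottom and q a top.  Hence the image of ad_x lies in the
   span BT of the r0 * r2 matrix units E_(b_i, t_k), giving rank ad_x <= r0 r2
   for every x in g; no hypothesis on r0, r1, r2 is needed for this half.

   Conversely, if r0 <= r1 the element x = sum_i E_(b_i, m_i) satisfies
   [x, E_(m_i, t_k)] = E_(b_i, t_k), and if r2 <= r1 the element
   x = sum_k E_(m_k, t_k) satisfies [x, E_(b_i, m_k)] = - E_(b_i, t_k); in
   both cases BT lies in the image of ad_x, so rank ad_x = r0 r2. *)

Section UnitRows.
Variables (F : fieldType) (m N : nat) (f : 'I_m -> 'I_N).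

Lemma mxrank_rowsub1 : injective f -> \rank (rowsub f 1%:M : 'M[F]_(m, N)) = m.
Proof.
move=> f_inj; apply/eqP; rewrite eqn_leq rank_leq_row /=.
set P : 'M[F]_(m, N) := rowsub f 1%:M.
have orth : P *m P^T = 1%:M.
  apply/matrixP => a b; rewrite !mxE (bigD1 (f a)) //= big1 => [|j ne].
    by rewrite !mxE !eqxx mul1r addr0 (inj_eq f_inj) eq_sym.
  by rewrite !mxE eq_sym (negbTE ne) mul0r.
by have := mxrankM_maxl P P^T; rewrite orth mxrank1.
Qed.

Lemma rowsub1_sub (u : 'rV[F]_N) :
  (forall j, j \notin codom f -> u 0 j = 0) -> (u <= rowsub f 1%:M)%MS.
Proof.
move=> supp; rewrite [u]row_sum_delta; apply/summx_sub => j _.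
have [/codomP [a ->] | /supp ->] := boolP (j \in codom f); last first.
  by rewrite scale0r sub0mx.
by apply/scalemx_sub; rewrite -row1 -(row_rowsub f) row_sub.
Qed.

End UnitRows.

Section UnitSums.
Variables (F : fieldType) (m N : nat) (f g : 'I_m -> 'I_N).

Local Notation S := (\sum_(a < m) delta_mx (f a) (g a) : 'M[F]_N).

Lemma unit_sum_mulmx a0 (c : 'I_N) :
  injective g -> S *m delta_mx (g a0) c = delta_mx (f a0) c.
Proof.
move=> g_inj; rewrite mulmx_suml (bigD1 a0) //= mul_delta_mx big1 ?addr0 //.
by move=> a ne; rewrite mul_delta_mx_cond (inj_eq g_inj) (negbTE ne) mulr0n.
Qed.

Lemma mulmx_unit_sum a0 (c : 'I_N) :
  injective f -> delta_mx c (f a0) *m S = delta_mx c (g a0).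
Proof.
move=> f_inj; rewrite mulmx_sumr (bigD1 a0) //= mul_delta_mx big1 ?addr0 //.
by move=> a ne; rewrite mul_delta_mx_cond (inj_eq f_inj) eq_sym (negbTE ne) mulr0n.
Qed.

Lemma unit_sum_mulmx0 (c d : 'I_N) : (forall a, g a != c) -> S *m delta_mx c d = 0.
Proof.
move=> gc; rewrite mulmx_suml big1 // => a _.
by rewrite mul_delta_mx_cond (negbTE (gc a)) mulr0n.
Qed.

Lemma mulmx_unit_sum0 (c d : 'I_N) : (forall a, d != f a) -> delta_mx c d *m S = 0.
Proof.
move=> df; rewrite mulmx_sumr big1 // => a _.
by rewrite mul_delta_mx_cond (negbTE (df a)) mulr0n.
Qed.

End UnitSums.

Lemma mxvec_index_inj m n (i i' : 'I_m) (j j' : 'I_n) :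
  mxvec_index i j = mxvec_index i' j' -> i = i' /\ j = j'.
Proof. by move/cast_ord_inj/enum_rank_inj => [-> ->]. Qed.

Section PosetAlgebra.
Variables (F : fieldType) (r0 r1 r2 : nat).
Local Notation n := (r0 + r1 + r2)%N.
Local Notation lev := (plevel r0 r1 r2).
Local Notation prec := (pprec r0 r1 r2).
Local Notation in_g := (in_gP F r0 r1 r2).
Local Notation ad_img := (ad_img F r0 r1 r2).
Local Notation rank_ad := (rank_ad F r0 r1 r2).

Definition bI (i : 'I_r0) : 'I_n := lshift r2 (lshift r1 i).
Definition mI (j : 'I_r1) : 'I_n := lshift r2 (rshift r0 j).
Definition tI (k : 'I_r2) : 'I_n := rshift (r0 + r1) k.

Lemma lev_b i : lev (bI i) = 0%N.
Proof. by rewrite /plevel /= ltn_ord. Qed.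

Lemma lev_m j : lev (mI j) = 1%N.
Proof. by rewrite /plevel /=; have := ltn_ord j; repeat case: ifP => ?; lia. Qed.

Lemma lev_t k : lev (tI k) = 2%N.
Proof. by rewrite /plevel /=; have := ltn_ord k; repeat case: ifP => ?; lia. Qed.

Lemma lev_le2 p : (lev p <= 2)%N.
Proof. by rewrite /plevel; repeat case: ifP. Qed.

Lemma bI_inj : injective bI. Proof. by move=> i j /lshift_inj/lshift_inj. Qed.
Lemma mI_inj : injective mI. Proof. by move=> i j /lshift_inj/rshift_inj. Qed.
Lemma tI_inj : injective tI. Proof. exact: rshift_inj. Qed.

Variant elem_spec : 'I_n -> Type :=
  | IsBottom i : elem_spec (bI i)
  | IsMiddle j : elem_spec (mI j)
  | IsTop k : elem_spec (tI k).

Lemma elemP p : elem_spec p.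
Proof.
case: (split_ordP p) => [a ->|k ->]; last exact: IsTop.
by case: (split_ordP a) => [i ->|j ->]; [exact: IsBottom | exact: IsMiddle].
Qed.

(* (p, q) is a bottom-top position, the only place where g^2 can live. *)
Definition bottop (p q : 'I_n) : bool := (lev p == 0%N) && (lev q == 2%N).

Lemma in_g_unit_sum m (f g : 'I_m -> 'I_n) :
  (forall a, prec (f a) (g a)) -> in_g (\sum_(a < m) delta_mx (f a) (g a)).
Proof.
move=> fg p q npq; rewrite summxE big1 // => a _; rewrite mxE.
have [ep | //] := eqP; have [eq_q | //] := eqP.
by move: npq; rewrite ep eq_q fg.
Qed.

Lemma projP_g E : in_g (projP F r0 r1 r2 E).
Proof. by move=> p q h; rewrite mxE (negbTE h). Qed.

Lemma projP_delta p q : prec p q -> projP F r0 r1 r2 (delta_mx p q) = delta_mx p q.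
Proof.
move=> pq; apply/matrixP => p' q'; rewrite !mxE.
case: ifP => // npq; have [ep | //] := eqP; have [eq_q | //] := eqP.
by rewrite ep eq_q pq in npq.
Qed.

Lemma mulmx_g_bottop (x y : 'M[F]_n) p q : in_g x -> in_g y ->
  ~~ bottop p q -> (x *m y) p q = 0.
Proof.
move=> gx gy npq; rewrite mxE big1 // => l _.
have [pl | /gx -> ] := boolP (prec p l); last by rewrite mul0r.
have [lq | /gy -> ] := boolP (prec l q); last by rewrite mulr0.
by move: npq pl lq; rewrite /bottop /pprec; have := lev_le2 q; lia.
Qed.

Lemma lie_br_g_bottop (x y : 'M[F]_n) p q : in_g x -> in_g y ->
  ~~ bottop p q -> lie_br F _ x y p q = 0.
Proof.
by move=> gx gy npq; rewrite /lie_br mxE [in X in _ + X]mxE !mulmx_g_bottop ?oppr0 ?addr0.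
Qed.

Local Notation BTidx := {: 'I_r0 * 'I_r2}.

Definition bt_index (c : 'I_#|BTidx|) : 'I_(n * n) :=
  mxvec_index (bI (enum_val c).1) (tI (enum_val c).2).

Definition BT : 'M[F]_(#|BTidx|, n * n) := rowsub bt_index 1%:M.

Lemma bt_index_inj : injective bt_index.
Proof.
move=> c c' /mxvec_index_inj [/bI_inj e1 /tI_inj e2]; apply: enum_val_inj.
by move: (enum_val c) (enum_val c') e1 e2 => [? ?] [? ?] /= -> ->.
Qed.

Lemma mxrank_BT : \rank BT = (r0 * r2)%N.
Proof. by rewrite mxrank_rowsub1 ?card_prod ?card_ord //; exact: bt_index_inj. Qed.

Lemma mxvec_bottop_sub (M : 'M[F]_n) :
  (forall p q, ~~ bottop p q -> M p q = 0) -> (mxvec M <= BT)%MS.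
Proof.
move=> supp; apply: rowsub1_sub => l; case/mxvec_indexP: l => p q.
rewrite mxvecE => notin; apply: supp; apply: contra notin.
case: (elemP p) => [i|j|k]; rewrite /bottop ?lev_b ?lev_m ?lev_t //=.
case: (elemP q) => [i'|j'|k']; rewrite ?lev_b ?lev_m ?lev_t //= => _.
by apply/codomP; exists (enum_rank (i, k')); rewrite /bt_index enum_rankK.
Qed.

Lemma BT_sub l (A : 'M[F]_(l, n * n)) :
  (forall i k, (mxvec (delta_mx (bI i) (tI k)) <= A)%MS) -> (BT <= A)%MS.
Proof.
by move=> hA; apply/row_subP => c; rewrite row_rowsub row1 -mxvec_delta.
Qed.

Lemma lie_br_delta_sub (x : 'M[F]_n) p q : prec p q ->
  (mxvec (lie_br F _ x (delta_mx p q)) <= ad_img x)%MS.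
Proof.
move=> pq; have := row_sub (mxvec_index p q) (ad_img x).
by rewrite rowK vec_mx_delta projP_delta.
Qed.

Lemma rank_ad_le (x : 'M[F]_n) : in_g x -> (rank_ad x <= r0 * r2)%N.
Proof.
move=> gx; rewrite /rank_ad -mxrank_BT; apply: mxrankS; apply/row_subP => c.
rewrite rowK; apply: mxvec_bottop_sub => p q; apply: lie_br_g_bottop => //.
exact: projP_g.
Qed.

Lemma rank_ad_eq (x : 'M[F]_n) : in_g x ->
  (forall i k, (mxvec (delta_mx (bI i) (tI k)) <= ad_img x)%MS) ->
  rank_ad x = (r0 * r2)%N.
Proof.
move=> gx hx; apply/eqP; rewrite eqn_leq rank_ad_le //= -mxrank_BT.
exact/mxrankS/BT_sub.
Qed.

(* Witness for r0 <= r1: x = sum_i E_(b_i, m_i), with [x, E_(m_i, t_k)] = E_(b_i, t_k). *)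
Lemma bottom_middle_witness : (r0 <= r1)%N ->
  exists x : 'M[F]_n, in_g x /\ rank_ad x = (r0 * r2)%N.
Proof.
move=> le01; pose w (a : 'I_r0) := mI (widen_ord le01 a).
have w_inj : injective w by move=> a b; rewrite /w => /mI_inj /(congr1 val) /= /val_inj.
pose x := \sum_(a < r0) delta_mx (bI a) (w a) : 'M[F]_n.
have gx : in_g x by apply: in_g_unit_sum => a; rewrite /pprec lev_b lev_m.
exists x; split => //; apply: rank_ad_eq => // i k.
have -> : delta_mx (bI i) (tI k) = lie_br F _ x (delta_mx (w i) (tI k)).
  rewrite /lie_br unit_sum_mulmx // mulmx_unit_sum0 ?subr0 // => a.
  exact/negbT/eq_rlshift.
by apply: lie_br_delta_sub; rewrite /pprec lev_m lev_t.
Qed.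

(* Witness for r2 <= r1: x = sum_k E_(m_k, t_k), with [x, E_(b_i, m_k)] = - E_(b_i, t_k). *)
Lemma middle_top_witness : (r2 <= r1)%N ->
  exists x : 'M[F]_n, in_g x /\ rank_ad x = (r0 * r2)%N.
Proof.
move=> le21; pose w (a : 'I_r2) := mI (widen_ord le21 a).
have w_inj : injective w by move=> a b; rewrite /w => /mI_inj /(congr1 val) /= /val_inj.
pose x := \sum_(a < r2) delta_mx (w a) (tI a) : 'M[F]_n.
have gx : in_g x by apply: in_g_unit_sum => a; rewrite /pprec lev_m lev_t.
exists x; split => //; apply: rank_ad_eq => // i k.
have -> : delta_mx (bI i) (tI k) = - lie_br F _ x (delta_mx (bI i) (w k)).
  rewrite /lie_br mulmx_unit_sum // unit_sum_mulmx0 ?sub0r ?opprK // => a.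
  exact/negbT/eq_rlshift.
rewrite linearN /= eqmx_opp.
by apply: lie_br_delta_sub; rewrite /pprec lev_b lev_m.
Qed.

End PosetAlgebra.

Theorem theorem3 (F : closedFieldType) (hF : [pchar F]%R =i pred0)
  (r0 r1 r2 : nat) (h0 : (1 <= r0)%N) (h1 : (1 <= r1)%N) (h2 : (1 <= r2)%N) :
  (r0 <= r1)%N || (r2 <= r1)%N ->
  breadth_is F r0 r1 r2 (r0 * r2)%N.
Proof.
move=> /orP cases; split; last by move=> x; exact: rank_ad_le.
by case: cases; [exact: bottom_middle_witness | exact: middle_top_witness].
Qed.
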